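(* Consider binary-tree pivotal sampling on a fixed full binary tree $T$ under the standing assumptions. Define a random assignment of values $\eta_v\in\{0,1\}$ to all non-root nodes of $T$ top-down as follows: for the children $r_1,r_2$ of the root, set $(\eta_{r_1},\eta_{r_2})=(1,0)$ with probability $\pi_{r_1}$ and $(0,1)$ otherwise; then, proceeding level by level, for each internal node $v$ already assigned, with children $v_1,v_2$, draw $(\eta_{v_1},\eta_{v_2})$ independently of everything else from the conditional law given $\xi_v=\eta_v$ described by: if $\pi_{v_1}+\pi_{v_2}>1$, $(1,1)$ when $\eta_v=1$, and when $\eta_v=0$, $(1,0)$ with probability $\frac{1-\pi_{v_2}}{2-\pi_{v_1}-\pi_{v_2}}$ and $(0,1)$ otherwise; if $\pi_{v_1}+\pi_{v_2}<1$, $(0,0)$ when $\eta_v=0$, and when $\eta_v=1$, $(1,0)$ with probability $\frac{\pi_{v_1}}{\pi_{v_1}+\pi_{v_2}}$ and $(0,1)$ otherwise. Then the vector $(\eta_\ell)_{\ell\text{ leaf}}$ has the same joint distribution as the vector $(\xi_\ell)_{\ell\text{ leaf}}$ of leaf inclusion indicators produced by binary-tree pivotal sampling.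
   Context: Binary-tree pivotal sampling: let $T$ be a full binary tree whose leaves are identified with an index set, and let $q_i\in[0,1]$ be leaf probabilities with integer sum. Each node can store an index together with a current probability; initially each leaf $i$ stores $i$ with probability $q_i$, and the output set $\mathcal S_{\rm out}$ is empty. Repeatedly choose two sibling nodes that both store indices, say $i$ with probability $q_i$ and $j$ with probability $q_j$, with parent $P$, and remove them. If $q_i+q_j\le1$: with probability $q_i/(q_i+q_j)$ store $i$ at $P$ with probability $q_i+q_j$ ($j$ is rejected), otherwise store $j$ at $P$ with probability $q_i+q_j$ ($i$ is rejected). If $q_i+q_j>1$: with probability $(1-q_i)/(2-q_i-q_j)$ put $j$ into $\mathcal S_{\rm out}$ and store $i$ at $P$ with probability $q_i+q_j-1$; otherwise put $i$ into $\mathcal S_{\rm out}$ and store $j$ at $P$ with probability $q_i+q_j-1$. When only the root stores an index, put it into $\mathcal S_{\rm out}$ iff its probability is $1$. Carried probabilities: $\pi_v=q_i$ for a leaf $v$ with index $i$; for an internal node $v$ with children $v_1,v_2$, $\pi_v=\pi_{v_1}+\pi_{v_2}$ if $\pi_{v_1}+\pi_{v_2}<1$ and $\pi_v=\pi_{v_1}+\pi_{v_2}-1$ if $\pi_{v_1}+\pi_{v_2}>1$. Node statuses: for a non-root node $v$, $\xi_v\in\{0,1\}$ is the indicator that the index stored at $v$ (for a leaf, its own index; for an internal node, the index promoted to $v$ by the comparison of its children) belongs to the final output $\mathcal S_{\rm out}$. Standing assumptions: all leaf probabilities lie in $(0,1)$; for every internal non-root node $v$ with children $v_1,v_2$, $\pi_{v_1}+\pi_{v_2}\ne1$;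 for the two children $r_1,r_2$ of the root, $\pi_{r_1}+\pi_{r_2}=1$. *)

From mathcomp Require Import all_boot all_order all_algebra.
Set Implicit Arguments. Unset Strict Implicit. Unset Printing Implicit Defensive.
Import Order.TTheory GRing.Theory Num.Theory.
Local Open Scope ring_scope.

(* Full binary trees whose leaves carry their probability q_i.
   Leaves are indexed by their position in left-to-right order. *)
Inductive tree (R : Type) : Type :=
| Leaf of R
| Node of tree R & tree R.
Arguments Leaf {R}.
Arguments Node {R}.

Section Defs.
Variable R : realFieldType.

Fixpoint nleaves (t : tree R) : nat :=
  match t with Leaf _ => 1%N | Node l r => (nleaves l + nleaves r)%N end.

Fixpoint sumq (t : tree R) : R :=
  match t with Leaf q => q | Node l r => sumq l + sumq r end.

Fixpoint leaves_open01 (t : tree R) : Prop :=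
  match t with
  | Leaf q => 0 < q < 1
  | Node l r => leaves_open01 l /\ leaves_open01 r
  end.

(* carried probabilities pi_v (the case sum = 1 only occurs at the root
   under the standing assumptions; there we set carried = 1, irrelevant) *)
Fixpoint carried (t : tree R) : R :=
  match t with
  | Leaf q => q
  | Node l r => let s := carried l + carried r in if s <= 1 then s else s - 1
  end.

(* for every internal node of t (t itself is NOT the root of T):
   pi_{v1} + pi_{v2} <> 1 *)
Fixpoint internal_ne1 (t : tree R) : Prop :=
  match t with
  | Leaf _ => True
  | Node l r => carried l + carried r != 1 /\ internal_ne1 l /\ internal_ne1 r
  end.

(* finitely supported (sub)probability distributions: weighted outcomes *)
Definition dist (A : Type) := seq (R * A).

Definition dscale (A : Type) (c : R) (d : dist A) : dist A :=
  [seq (c * p.1, p.2) | p <- d].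

Definition dprod (A B C : Type) (f : A -> B -> C) (d1 : dist A) (d2 : dist B)
  : dist C :=
  [seq (p1.1 * p2.1, f p1.2 p2.2) | p1 <- d1, p2 <- d2].

Definition mass (A : eqType) (d : dist A) (b : A) : R :=
  \sum_(p <- d | p.2 == b) p.1.

(* ---- Binary-tree pivotal sampling (bottom-up) ----
   The state of a processed subtree: the inclusion indicators of its leaves
   (true = already put in S_out), the (local) index stored at the subtree's
   root and its current probability. *)
Definition pstate := (seq bool * nat * R)%type.

Definition merge (a b : pstate) : dist pstate :=
  let: (s1, i, qi) := a in
  let: (s2, j0, qj) := b in
  let j := (size s1 + j0)%N in
  let s := s1 ++ s2 in
  if qi + qj <= 1 then
    [:: (qi / (qi + qj), (s, i, qi + qj));
        (1 - qi / (qi + qj), (s, j, qi + qj))]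
  else
    [:: ((1 - qi) / (2 - qi - qj), (set_nth false s j true, i, qi + qj - 1));
        (1 - (1 - qi) / (2 - qi - qj), (set_nth false s i true, j, qi + qj - 1))].

Fixpoint pivotal_sub (t : tree R) : dist pstate :=
  match t with
  | Leaf q => [:: (1, ([:: false], 0%N, q))]
  | Node l r =>
      flatten [seq dscale (p1.1 * p2.1) (merge p1.2 p2.2)
              | p1 <- pivotal_sub l, p2 <- pivotal_sub r]
  end.

Definition pivotal (t : tree R) : dist (seq bool) :=
  [seq (p.1, let: (s, i, q) := p.2 in if q == 1 then set_nth false s i true else s)
  | p <- pivotal_sub t].

(* ---- Top-down assignment eta ----
   topdown_sub t b : law of the leaf values (eta_l)_l of subtree t given eta_t = b *)
Fixpoint topdown_sub (t : tree R) (b : bool) : dist (seq bool) :=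
  match t with
  | Leaf _ => [:: (1, [:: b])]
  | Node l r =>
      let p1 := carried l in let p2 := carried r in
      let both (b1 b2 : bool) := dprod cat (topdown_sub l b1) (topdown_sub r b2) in
      if 1 < p1 + p2 then
        if b then both true true
        else dscale ((1 - p2) / (2 - p1 - p2)) (both true false) ++
             dscale (1 - (1 - p2) / (2 - p1 - p2)) (both false true)
      else
        if ~~ b then both false false
        else dscale (p1 / (p1 + p2)) (both true false) ++
             dscale (1 - p1 / (p1 + p2)) (both false true)
  end.

Definition topdown (r1 r2 : tree R) : dist (seq bool) :=
  dscale (carried r1) (dprod cat (topdown_sub r1 true) (topdown_sub r2 false)) ++
  dscale (1 - carried r1) (dprod cat (topdown_sub r1 false) (topdown_sub r2 true)).

End Defs.

(* Induction on the tree, carrying the conditional law of the leaves given the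
   fate of the index that pivotal sampling leaves at the root of a subtree:
   in pivotal sampling the probabilities stored at every node are the
   deterministic carried probabilities, so the random choice made at a merge
   depends only on them, never on what happened below.  Conditioning on the
   fate [b] of the index stored at a node therefore determines the fates of the
   two indices stored at its children with exactly the top-down transition
   law, independently of the two subtrees; the root, whose children carry
   probabilities summing to 1, is the case [b = true] of the same rule. *)

From Pilot Require Import Defs.
From mathcomp Require Import all_boot all_order all_algebra.
From mathcomp Require Import ring lra zify.
Import Order.TTheory GRing.Theory Num.Theory.
Local Open Scope ring_scope.

Set Implicit Arguments. Unset Strict Implicit.

Lemma set_nth_catl (T : Type) (x0 : T) (s1 s2 : seq T) i y : (i < size s1)%N ->
  set_nth x0 (s1 ++ s2) i y = set_nth x0 s1 i y ++ s2.
Proof. by elim: s1 i => [|x s1 IH] [|i] //= /IH ->. Qed.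

Lemma set_nth_catr (T : Type) (x0 : T) (s1 s2 : seq T) j y :
  set_nth x0 (s1 ++ s2) (size s1 + j) y = s1 ++ set_nth x0 s2 j y.
Proof. by elim: s1 => //= x s1 ->. Qed.

Section Expectation.
Variable R : realFieldType.

Definition expect (A : Type) (d : dist R A) (f : A -> R) : R :=
  \sum_(p <- d) p.1 * f p.2.

Lemma expect_cat A (d1 d2 : dist R A) f :
  expect (d1 ++ d2) f = expect d1 f + expect d2 f.
Proof. by rewrite /expect big_cat. Qed.

Lemma expect_scale A c (d : dist R A) f : expect (dscale c d) f = c * expect d f.
Proof.
by rewrite /expect big_map mulr_sumr; apply: eq_bigr => p _ /=; rewrite mulrA.
Qed.

Lemma expect_prod A B C (g : A -> B -> C) (d1 : dist R A) (d2 : dist R B) f :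
  expect (dprod g d1 d2) f =
  expect d1 (fun a => expect d2 (fun c => f (g a c))).
Proof.
rewrite /expect /dprod big_allpairs_dep; apply: eq_bigr => p _ /=.
by rewrite mulr_sumr; apply: eq_bigr => q _ /=; rewrite mulrA.
Qed.

Lemma eq_expect A (d : dist R A) f g : f =1 g -> expect d f = expect d g.
Proof. by move=> fg; apply: eq_bigr => p _; rewrite fg. Qed.

Lemma eq_expect_in (A : eqType) (d : dist R A) f g :
  {in [seq p.2 | p <- d], f =1 g} -> expect d f = expect d g.
Proof.
move=> fg; rewrite /expect big_seq_cond [RHS]big_seq_cond.
by apply: eq_bigr => p /andP[dp _]; rewrite fg // (map_f snd dp).
Qed.

Lemma mass_expect (A : eqType) (d : dist R A) x :
  mass d x = expect d (fun y => (y == x)%:R).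
Proof.
rewrite /mass /expect big_mkcond; apply: eq_bigr => p _ /=.
by case: (p.2 == x); rewrite ?mulr1 ?mulr0.
Qed.

End Expectation.

Section Pivotal.
Variable R : realFieldType.

(* Conditional expectation of [g b1 b2], where [b1] and [b2] are the fates of
   the indices stored at two sibling nodes carrying [p1] and [p2], given the
   fate [b] of the index promoted to their parent. *)
Definition node_mix (p1 p2 : R) (b : bool) (g : bool -> bool -> R) : R :=
  if p1 + p2 <= 1 then
    if b then p1 / (p1 + p2) * g true false + (1 - p1 / (p1 + p2)) * g false true
    else g false false
  else
    if b then g true true
    else (1 - p1) / (2 - p1 - p2) * g false true
         + (1 - (1 - p1) / (2 - p1 - p2)) * g true false.

Lemma eq_node_mix p1 p2 b (g h : bool -> bool -> R) :
  (forall b1 b2, g b1 b2 = h b1 b2) -> node_mix p1 p2 b g = node_mix p1 p2 b h.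
Proof. by move=> gh; rewrite /node_mix !gh. Qed.

Lemma expect_node_mix A (d : dist R A) p1 p2 b (g : A -> bool -> bool -> R) :
  expect d (fun x => node_mix p1 p2 b (g x)) =
  node_mix p1 p2 b (fun b1 b2 => expect d (fun x => g x b1 b2)).
Proof.
rewrite /node_mix; case: ifP => _; case: b => //.
all: rewrite /expect !mulr_sumr -big_split; apply: eq_bigr => p _ /=; ring.
Qed.

Definition resolve (b : bool) (st : pstate R) : seq bool :=
  if b then set_nth false st.1.1 st.1.2 true else st.1.1.

Lemma expect_pivotal_sub_node (l r : tree R) f :
  expect (pivotal_sub (Node l r)) f =
  expect (pivotal_sub l) (fun a =>
    expect (pivotal_sub r) (fun c => expect (Defs.merge a c) f)).
Proof.
rewrite /= /expect big_flatten big_allpairs_dep /=.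
apply: eq_bigr => p _; rewrite mulr_sumr; apply: eq_bigr => q _.
by rewrite /dscale big_map !mulr_sumr; apply: eq_bigr => x _ /=; rewrite !mulrA.
Qed.

Lemma pivotal_sub_state (t : tree R) st : st \in [seq p.2 | p <- pivotal_sub t] ->
  [/\ size st.1.1 = nleaves t, (st.1.2 < nleaves t)%N & st.2 = carried t].
Proof.
elim: t st => [q|l IHl r IHr] st /=; first by rewrite inE => /eqP ->.
case/mapP=> x /flattenP[_ /allpairsPdep[[w1 a] [[w2 c] [la rc ->]]]] + ->.
case/mapP=> [[w st']] + -> /=.
have {IHl la}[/= sa ia qa] := IHl a (map_f snd la).
have {IHr rc}[/= sc ic qc] := IHr c (map_f snd rc).
case: a sa ia qa => [[s1 i] q1] /= sa ia <-.
case: c sc ic qc => [[s2 j] q2] /= sc jc <-.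
have size_set k : (k < size (s1 ++ s2))%N ->
    size (set_nth false (s1 ++ s2) k true) = size (s1 ++ s2).
  by move=> lt_k; rewrite size_set_nth; apply/maxn_idPr.
rewrite /Defs.merge; case: ifP => _; rewrite !inE => /orP[] /eqP[_ ->] /=.
all: split=> //; rewrite ?size_set ?size_cat ?sa ?sc; lia.
Qed.

Lemma expect_merge (a c : pstate R) b f :
  (a.1.2 < size a.1.1)%N ->
  expect (Defs.merge a c) (f \o resolve b) =
  node_mix a.2 c.2 b (fun b1 b2 => f (resolve b1 a ++ resolve b2 c)).
Proof.
case: a c => [[s1 i] q1] [[s2 j] q2] /= lt_i.
have ne_ij : (i == size s1 + j) = false by rewrite ltn_eqF ?ltn_addr.
rewrite /Defs.merge /node_mix /expect.
case: ifP => _; case: b; rewrite !big_cons big_nil /resolve /=.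
- by rewrite set_nth_catl // set_nth_catr; ring.
- ring.
- rewrite set_nth_catr set_nth_catl // set_set_nth ne_ij.
  by rewrite set_nth_catr set_nth_catl //; ring.
- by rewrite set_nth_catr set_nth_catl //; ring.
Qed.

Definition coupled (t : tree R) : Prop :=
  forall b (f : seq bool -> R),
    expect (pivotal_sub t) (f \o resolve b) = expect (topdown_sub t b) f.

Lemma expect_pivotal_sub_resolve (l r : tree R) : coupled l -> coupled r ->
  forall b f, expect (pivotal_sub (Node l r)) (f \o resolve b) =
  node_mix (carried l) (carried r) b
    (fun b1 b2 => expect (dprod cat (topdown_sub l b1) (topdown_sub r b2)) f).
Proof.
move=> cpl_l cpl_r b f; rewrite expect_pivotal_sub_node.
have leaf_index (t : tree R) (st : pstate R) :
    st \in [seq p.2 | p <- pivotal_sub t] -> (st.1.2 < size st.1.1)%N.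
  by move=> /pivotal_sub_state[-> ? _].
transitivity (expect (pivotal_sub l) (fun a => expect (pivotal_sub r) (fun c =>
    node_mix (carried l) (carried r) b
      (fun b1 b2 => f (resolve b1 a ++ resolve b2 c))))).
  apply: eq_expect_in => a la; apply: eq_expect_in => c rc.
  rewrite expect_merge ?(leaf_index _ _ la) //.
  by have [_ _ ->] := pivotal_sub_state la; have [_ _ ->] := pivotal_sub_state rc.
under eq_expect do rewrite expect_node_mix.
rewrite expect_node_mix; apply: eq_node_mix => b1 b2.
rewrite expect_prod -cpl_l; apply: eq_expect => a /=.
by rewrite -cpl_r.
Qed.

Lemma expect_topdown_sub_node (l r : tree R) b f :
  carried l < 1 -> carried r < 1 -> carried l + carried r != 1 ->
  expect (topdown_sub (Node l r) b) f =
  node_mix (carried l) (carried r) b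
    (fun b1 b2 => expect (dprod cat (topdown_sub l b1) (topdown_sub r b2)) f).
Proof.
move=> lt_l lt_r ne1; have nz : 2 - carried l - carried r != 0.
  by apply: lt0r_neq0; lra.
rewrite /= /node_mix; case: ltP => _; case: b => //=.
all: rewrite expect_cat !expect_scale //.
by rewrite addrC; congr (_ * _ + _ * _); field.
Qed.

Lemma carried_gt0_lt1 (t : tree R) :
  leaves_open01 t -> internal_ne1 t -> 0 < carried t < 1.
Proof.
elim: t => [q|l IHl r IHr] //= [Ol Or] [ne1 [Nl Nr]].
case/andP: (IHl Ol Nl) => ? ?; case/andP: (IHr Or Nr) => ? ?.
case: ifP => [le1 | /negbT]; last by rewrite -ltNge => ?; apply/andP; split; lra.
by apply/andP; split; [lra | rewrite lt_neqAle ne1].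
Qed.

Lemma pivotal_sub_coupled (t : tree R) :
  leaves_open01 t -> internal_ne1 t -> coupled t.
Proof.
elim: t => [q|l IHl r IHr].
  by move=> _ _ [] f; rewrite /expect /= !big_cons !big_nil.
move=> [Ol Or] [ne1 [Nl Nr]] b f.
case/andP: (carried_gt0_lt1 Ol Nl) => _ ?; case/andP: (carried_gt0_lt1 Or Nr) => _ ?.
by rewrite (expect_pivotal_sub_resolve (IHl Ol Nl) (IHr Or Nr)) expect_topdown_sub_node.
Qed.

Lemma expect_pivotal (t : tree R) f :
  carried t = 1 -> expect (pivotal t) f = expect (pivotal_sub t) (f \o resolve true).
Proof.
move=> c1; rewrite /pivotal /expect big_map; apply: eq_big_seq => -[w [[s i] q]].
by move=> /(map_f snd)/pivotal_sub_state[_ _ /= ->]; rewrite c1 eqxx.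
Qed.

Lemma expect_topdown (r1 r2 : tree R) f : carried r1 + carried r2 = 1 ->
  expect (topdown r1 r2) f =
  node_mix (carried r1) (carried r2) true
    (fun b1 b2 => expect (dprod cat (topdown_sub r1 b1) (topdown_sub r2 b2)) f).
Proof.
by move=> c1; rewrite /topdown /node_mix expect_cat !expect_scale c1 lexx divr1.
Qed.

End Pivotal.

Theorem propositionE12 (R : realFieldType) (r1 r2 : tree R) :
  leaves_open01 (Node r1 r2) ->
  (exists n : nat, sumq (Node r1 r2) = n%:R) ->
  internal_ne1 r1 -> internal_ne1 r2 ->
  carried r1 + carried r2 = 1 ->
  forall b : seq bool,
    mass (pivotal (Node r1 r2)) b = mass (topdown r1 r2) b.
Proof.
move=> [Ol Or] _ Nl Nr c1 b.
have root_carried : carried (Node r1 r2) = 1 by rewrite /= c1 lexx.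
rewrite !mass_expect expect_pivotal // expect_topdown //.
by rewrite expect_pivotal_sub_resolve //; apply: pivotal_sub_coupled.
Qed.
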